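(* Let $N, M \in \mathrm{GL}(3,\mathbb{Z})$ satisfy: (i) $NM = MN$; (ii) $1$ is an eigenvalue of $N^n M^m$ for all $(n,m) \in \mathbb{Z}^2$; (iii) $\{k \in \mathbb{Z}^3 : N^n M^m k = k \text{ for all } (n,m) \in \mathbb{Z}^2\} = \{0\}$. Let $C \in \mathrm{GL}(3,\mathbb{Z})$ commute with both $N$ and $M$, and suppose $1$ is an eigenvalue of $N^n M^m C^s$ for all $(n,m,s) \in \mathbb{Z}^3$. Then $C$ belongs to the subgroup of $\mathrm{GL}(3,\mathbb{Z})$ generated by $N$ and $M$. *)

From HB Require Import structures.
From mathcomp Require Import all_boot all_order all_algebra.
Set Implicit Arguments. Unset Strict Implicit. Unset Printing Implicit Defensive.
Import Order.TTheory GRing.Theory Num.Theory.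
Local Open Scope ring_scope.

Definition GL3Z (A : 'M[int]_3) : Prop := A \in unitmx.

Definition has_eigenvalue1 (A : 'M[int]_3) : Prop :=
  eigenvalue (map_mx (intr : int -> rat) A) 1.

Inductive gen_subgroup2 (N M : 'M[int]_3) : 'M[int]_3 -> Prop :=
  | gen_N : gen_subgroup2 N M N
  | gen_M : gen_subgroup2 N M M
  | gen_1 : gen_subgroup2 N M 1
  | gen_mul A B : gen_subgroup2 N M A -> gen_subgroup2 N M B -> gen_subgroup2 N M (A * B)
  | gen_inv A : gen_subgroup2 N M A -> gen_subgroup2 N M (A^-1).

(* Over the algebraic numbers the commuting matrices N, M, C are simultaneously
   triangularizable; let a_i, b_i, c_i (i < 3) be their diagonal entries.  The
   eigenvalue hypothesis on N^n M^m C^s says that the kernels of the three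
   characters (n, m, s) |-> a_i^n b_i^m c_i^s cover Z^3.  None of these kernels
   is everything: a_i = b_i = 1 would give N and M a common eigenvector for 1,
   hence a common integral fixed vector, excluded by (iii).  Since a group is
   never the union of two proper subgroups, three proper subgroups covering Z^3
   all contain 2 Z^3, so every eigenvalue is +1 or -1, and a finite check then
   shows that the pairs (a_i, b_i) are distinct and that c_i = a_i^al b_i^be for
   fixed al, be in {0, 1}.  Finally, a triangular matrix commuting with two
   triangular matrices whose diagonal pairs are distinct is determined by its
   diagonal, so C = N^al M^be. *)

From HB Require Import structures.
From mathcomp Require Import all_boot all_order all_algebra algC zify.
Import Order.TTheory GRing.Theory Num.Theory.
Set Implicit Arguments. Unset Strict Implicit. Unset Printing Implicit Defensive.
Local Open Scope ring_scope.

Section TriangularMatrices.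
Variables (R : pzRingType) (n : nat).
Implicit Types (A B T : 'M[R]_n).

Lemma trig_mxD A B : is_trig_mx A -> is_trig_mx B -> is_trig_mx (A + B).
Proof.
move=> /is_trig_mxP tA /is_trig_mxP tB; apply/is_trig_mxP => i j lt_ij.
by rewrite mxE tA ?tB ?addr0.
Qed.

Lemma trig_mxN A : is_trig_mx A -> is_trig_mx (- A).
Proof.
by move=> /is_trig_mxP tA; apply/is_trig_mxP => i j lt_ij; rewrite mxE tA ?oppr0.
Qed.

Lemma trig_mxB A B : is_trig_mx A -> is_trig_mx B -> is_trig_mx (A - B).
Proof. by move=> tA tB; rewrite trig_mxD ?trig_mxN. Qed.

Lemma trig_mxZ a A : is_trig_mx A -> is_trig_mx (a *: A).
Proof.
by move=> /is_trig_mxP tA; apply/is_trig_mxP => i j lt_ij; rewrite mxE tA ?mulr0.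
Qed.

Lemma trig_mulmx A B : is_trig_mx A -> is_trig_mx B -> is_trig_mx (A *m B).
Proof.
move=> /is_trig_mxP tA /is_trig_mxP tB; apply/is_trig_mxP => i j lt_ij.
rewrite mxE big1 // => k _; have [lt_ik | le_ki] := ltnP i k.
  by rewrite tA ?mul0r.
by rewrite tB ?mulr0 // (leq_ltn_trans le_ki lt_ij).
Qed.

Lemma mulmx_trig_diag A B i :
  is_trig_mx A -> is_trig_mx B -> (A *m B) i i = A i i * B i i.
Proof.
move=> /is_trig_mxP tA /is_trig_mxP tB.
rewrite mxE (bigD1 i) //= big1 ?addr0 // => k /negPf neq_ki.
have [lt_ik | lt_ki | eq_ik] := ltngtP i k; first by rewrite tA ?mul0r.
  by rewrite tB ?mulr0.
by rewrite -val_eqE /= eq_ik eqxx in neq_ki.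
Qed.

Lemma trig_mxXn T k :
  is_trig_mx T -> is_trig_mx (T ^+ k) /\ forall i, (T ^+ k) i i = T i i ^+ k.
Proof.
move=> tT; elim: k => [|k [tTk dTk]].
  by rewrite expr0; split=> [|i]; [exact: scalar_mx_is_trig | rewrite mxE eqxx].
rewrite exprS -mulmxE; split=> [|i]; first exact: trig_mulmx.
by rewrite mulmx_trig_diag // dTk exprS.
Qed.

End TriangularMatrices.

Lemma trig_mxXz (R : comUnitRingType) n (T : 'M[R]_n.+1) (z : int) :
  T \is a GRing.unit -> is_trig_mx T -> is_trig_mx T^-1 ->
  is_trig_mx (T ^ z) /\ forall i, (T ^ z) i i = T i i ^ z.
Proof.
move=> uT tT tTV; case: z => k; first exact: trig_mxXn.
have dTV i : T^-1 i i = (T i i)^-1.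
  by apply/esym/mulr1_eq; rewrite -mulmx_trig_diag // mulmxE mulrV // mxE eqxx.
have [tTVk dTVk] := trig_mxXn k.+1 tTV.
by rewrite /exprz -exprVn; split=> // i; rewrite dTVk dTV exprVn.
Qed.

Lemma trig_eigenvalue (F : fieldType) n (A : 'M[F]_n) a :
  is_trig_mx A -> eigenvalue A a -> exists i, A i i = a.
Proof.
move=> tA; rewrite eigenvalue_root_char char_poly_trig // => /rootP.
rewrite horner_prod => /eqP; rewrite prodf_seq_eq0 => /hasP[i _].
by rewrite hornerXsubC subr_eq0 => /eqP->; exists i.
Qed.

Lemma trig_unitmx_diag_neq0 (F : fieldType) n (A : 'M[F]_n) i :
  is_trig_mx A -> A \in unitmx -> A i i != 0.
Proof.
move=> tA; rewrite unitmxE det_trig // unitfE => /prodf_neq0; exact.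
Qed.

Section CommonKernel.
Variables (R : idomainType) (n : nat).
Implicit Types (A : 'M[R]_n) (v : 'cV[R]_n).

(* [is_trig_mx] means lower triangular, so such matrices preserve the vectors
   whose first k coordinates vanish. *)
Definition supported_from v (k : nat) := forall i : 'I_n, (i < k)%N -> v i 0 = 0.

Lemma supported_from_delta (k : 'I_n) : supported_from (delta_mx k 0) k.
Proof. by move=> i lt_ik; rewrite mxE -val_eqE /= (ltn_eqF lt_ik). Qed.

Lemma supported_from_eq0 v : supported_from v n -> v = 0.
Proof. by move=> sv; apply/matrixP => i j; rewrite ord1 mxE sv. Qed.

Lemma trig_supported_from A v k :
  is_trig_mx A -> supported_from v k -> supported_from (A *m v) k.
Proof.
move=> /is_trig_mxP tA sv i lt_ik; rewrite mxE big1 // => j _.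
have [lt_ij | le_ji] := ltnP i j; first by rewrite tA ?mul0r.
by rewrite sv ?mulr0 // (leq_ltn_trans le_ji lt_ik).
Qed.

Lemma trig_supported_from_lead A v (k : 'I_n) :
  is_trig_mx A -> supported_from v k -> (A *m v) k 0 = A k k * v k 0.
Proof.
move=> /is_trig_mxP tA sv; rewrite mxE (bigD1 k) //= big1 ?addr0 // => j /negPf.
have [lt_kj | lt_jk | /val_inj->] := ltngtP k j; last by rewrite eqxx.
  by rewrite tA ?mul0r.
by rewrite sv ?mulr0.
Qed.

Lemma trig_supported_from_succ A v (k : 'I_n) :
  is_trig_mx A -> A k k = 0 -> supported_from v k -> supported_from (A *m v) k.+1.
Proof.
move=> tA Akk sv i; rewrite ltnS leq_eqVlt => /predU1P[/val_inj-> | lt_ik].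
  by rewrite trig_supported_from_lead // Akk mul0r.
exact: trig_supported_from tA sv i lt_ik.
Qed.

Variables X Y : 'M[R]_n.
Hypotheses (tX : is_trig_mx X) (tY : is_trig_mx Y) (cXY : X *m Y = Y *m X).

(* Multiplying w by [pencil_at k], which commutes with X and Y and vanishes at
   (k, k), pushes the supports of X w and Y w past k; its diagonal entry at a
   common zero of the diagonals of X and Y is nonzero unless k is one too. *)
Definition pencil_at (k : 'I_n) := X - (X k k)%:M + (X k k == 0)%:R *: (Y - (Y k k)%:M).

Lemma pencil_at_trig k : is_trig_mx (pencil_at k).
Proof. by rewrite trig_mxD ?trig_mxZ ?trig_mxB ?scalar_mx_is_trig. Qed.

Lemma pencil_at_comm k :
  pencil_at k *m X = X *m pencil_at k /\ pencil_at k *m Y = Y *m pencil_at k.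
Proof.
rewrite !(mulmxDl, mulmxDr, mulNmx, mulmxN) -!scalemxAl -!scalemxAr.
by rewrite !(mulmxDl, mulmxDr, mulNmx, mulmxN) !scalar_mxC cXY.
Qed.

Lemma pencil_at_diag k : pencil_at k k k = 0.
Proof. by rewrite !mxE eqxx !subrr mulr0 addr0. Qed.

Lemma pencil_at_diag_neq0 k j : X j j = 0 -> Y j j = 0 ->
  ~~ ((X k k == 0) && (Y k k == 0)) -> pencil_at k j j != 0.
Proof.
move=> Xj Yj; rewrite !mxE eqxx Xj Yj !sub0r !mulr1n.
by have [->|] := eqVneq (X k k) 0; rewrite ?mul1r ?oppr0 ?add0r ?mul0r ?addr0 oppr_eq0.
Qed.

Definition partial_common_kernel (k : nat) := exists (j : 'I_n) (w : 'cV[R]_n),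
  [/\ X j j = 0 /\ Y j j = 0, supported_from w j, w j 0 != 0,
      supported_from (X *m w) k & supported_from (Y *m w) k].

Lemma partial_common_kernel_start (l : 'I_n) :
  X l l = 0 -> Y l l = 0 -> partial_common_kernel l.+1.
Proof.
move=> Xl Yl; exists l, (delta_mx l 0); split.
- by [].
- exact: supported_from_delta.
- by rewrite mxE !eqxx oner_neq0.
- by apply: trig_supported_from_succ => //; apply: supported_from_delta.
- by apply: trig_supported_from_succ => //; apply: supported_from_delta.
Qed.

Lemma partial_common_kernel_step k :
  (k < n)%N -> partial_common_kernel k -> partial_common_kernel k.+1.
Proof.
move=> lt_kn [j [w [[Xj Yj] sw wj sXw sYw]]]; pose k' := Ordinal lt_kn.
have [/andP[/eqP Xk /eqP Yk] | nk] := boolP ((X k' k' == 0) && (Y k' k' == 0)).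
  exact: partial_common_kernel_start k' Xk Yk.
have [cX cY] := pencil_at_comm k'; have tZ := pencil_at_trig k'.
exists j, (pencil_at k' *m w); split=> //.
- exact: trig_supported_from.
- by rewrite trig_supported_from_lead // mulf_neq0 // pencil_at_diag_neq0.
- rewrite mulmxA -cX -mulmxA.
  exact: (trig_supported_from_succ (k := k')) tZ (pencil_at_diag k') sXw.
- rewrite mulmxA -cY -mulmxA.
  exact: (trig_supported_from_succ (k := k')) tZ (pencil_at_diag k') sYw.
Qed.

Lemma trig_common_kernel (i : 'I_n) : X i i = 0 -> Y i i = 0 ->
  exists2 u : 'cV[R]_n, u != 0 & X *m u = 0 /\ Y *m u = 0.
Proof.
move=> Xi Yi; have: partial_common_kernel n.
  suff: forall k, (i < k <= n)%N -> partial_common_kernel k.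
    by apply; rewrite ltn_ord leqnn.
  elim=> // k IHk /andP[]; rewrite ltnS leq_eqVlt => /predU1P[<- _ | lt_ik lt_kn].
    exact: partial_common_kernel_start.
  by apply: (partial_common_kernel_step lt_kn); apply: IHk; rewrite lt_ik (ltnW lt_kn).
move=> [j [w [_ _ wj sXw sYw]]].
exists w; last by split; apply: supported_from_eq0.
by apply: contraNneq wj => ->; rewrite mxE.
Qed.

End CommonKernel.

Section TriangularCommutant.
Variables (R : idomainType) (n : nat).
Implicit Types (D T U V : 'M[R]_n).

Lemma trig_comm_entry D T (i j : 'I_n) :
  is_trig_mx D -> is_trig_mx T -> (forall k, D k k = 0) ->
  (forall k : 'I_n, (j < k < i)%N -> D i k = 0 /\ D k j = 0) ->
  D *m T = T *m D -> D i j * T j j = T i i * D i j.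
Proof.
move=> /is_trig_mxP tD /is_trig_mxP tT D0 Dij /matrixP/(_ i j).
rewrite !mxE (bigD1 j) //= [in RHS](bigD1 i) //= !big1 ?addr0 // => k /negPf nk.
  have [lt_ik | lt_ki | /val_inj eq_ki] := ltngtP i k; last by rewrite eq_ki eqxx in nk.
    by rewrite tT ?mul0r.
  have [lt_jk | lt_kj | /val_inj->] := ltngtP j k; last by rewrite D0 mulr0.
    by rewrite (proj2 (Dij k _)) ?mulr0 // lt_jk lt_ki.
  by rewrite tD ?mulr0.
have [lt_kj | lt_jk | /val_inj eq_kj] := ltngtP k j; last by rewrite eq_kj eqxx in nk.
  by rewrite tT ?mulr0.
have [lt_ki | lt_ik | /val_inj->] := ltngtP k i; last by rewrite D0 mul0r.
  by rewrite (proj1 (Dij k _)) ?mul0r // lt_jk lt_ki.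
by rewrite tD ?mul0r.
Qed.

Lemma trig_commutant_eq0 D T1 T2 :
  is_trig_mx D -> is_trig_mx T1 -> is_trig_mx T2 -> (forall k, D k k = 0) ->
  D *m T1 = T1 *m D -> D *m T2 = T2 *m D ->
  injective (fun i => (T1 i i, T2 i i)) -> D = 0.
Proof.
move=> tD tT1 tT2 D0 cD1 cD2 inj12.
suff Dij d (i j : 'I_n) : (i - j <= d)%N -> D i j = 0.
  by apply/matrixP => i j; rewrite mxE (Dij (i - j)%N).
elim: d => [|d IH] in i j *.
  rewrite leqn0 subn_eq0 leq_eqVlt => /predU1P[/val_inj-> | lt_ij]; first exact: D0.
  by move/is_trig_mxP: tD => ->.
move=> le_ij_d; have [<- | neq_ij] := eqVneq i j; first exact: D0.
have between (k : 'I_n) : (j < k < i)%N -> D i k = 0 /\ D k j = 0.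
  by move=> /andP[lt_jk lt_ki]; split; apply: IH; lia.
have Dij_eq0 T : is_trig_mx T -> D *m T = T *m D -> T i i != T j j -> D i j = 0.
  move=> tT cDT neqT; have eDT := trig_comm_entry tD tT D0 between cDT.
  have: D i j * (T i i - T j j) == 0 by rewrite mulrBr eDT mulrC subrr.
  by rewrite mulf_eq0 subr_eq0 (negPf neqT) orbF => /eqP.
have := contra_neq (@inj12 i j) neq_ij; rewrite xpair_eqE negb_and.
by case/orP; [apply: Dij_eq0 | apply: Dij_eq0].
Qed.

Lemma trig_commutant_eq_diag U V T1 T2 :
  is_trig_mx U -> is_trig_mx V -> is_trig_mx T1 -> is_trig_mx T2 ->
  U *m T1 = T1 *m U -> V *m T1 = T1 *m V -> U *m T2 = T2 *m U -> V *m T2 = T2 *m V ->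
  (forall i, U i i = V i i) -> injective (fun i => (T1 i i, T2 i i)) -> U = V.
Proof.
move=> tU tV tT1 tT2 cU1 cV1 cU2 cV2 eqUV inj12; apply/eqP; rewrite -subr_eq0.
apply/eqP/(trig_commutant_eq0 (T1 := T1) (T2 := T2)) => //.
- exact: trig_mxB.
- by move=> k; rewrite !mxE eqUV subrr.
- by rewrite mulmxBl mulmxBr cU1 cV1.
- by rewrite mulmxBl mulmxBr cU2 cV2.
Qed.

End TriangularCommutant.

Section UnitConjugation.
Variables (F : fieldType) (n : nat) (P : 'M[F]_n.+1).
Hypothesis uP : P \in unitmx.
Implicit Types (A B : 'M[F]_n.+1).

Lemma conjmx_mul A B : conjmx P (A * B) = conjmx P A * conjmx P B.
Proof. by rewrite -!mulmxE conjmxM // inE stablemx_unit. Qed.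

Lemma conjmx_one : conjmx P 1 = 1.
Proof. by rewrite conjmx_scalar // row_free_unit. Qed.

Lemma conjmx_unit A : A \in unitmx -> conjmx P A \in unitmx.
Proof. by move=> uA; rewrite conjumx // !unitmx_mul uP uA unitmx_inv. Qed.

Lemma conjmxV A : A \in unitmx -> conjmx P A^-1 = (conjmx P A)^-1.
Proof.
move=> uA; rewrite -[LHS](mulKr (conjmx_unit uA)) -conjmx_mul mulrV //.
by rewrite conjmx_one mulr1.
Qed.

Lemma conjmx_exprz A (z : int) : A \in unitmx -> conjmx P (A ^ z) = conjmx P A ^ z.
Proof.
have conjmxX B k : conjmx P (B ^+ k) = conjmx P B ^+ k.
  by elim: k => [|k IHk]; rewrite ?conjmx_one // !exprS conjmx_mul IHk.
move=> uA; case: z => k; first exact: conjmxX.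
by rewrite /exprz conjmxV ?conjmxX // unitrX.
Qed.

End UnitConjugation.

Lemma cotrigonalization_units (C : numClosedFieldType) n (As : seq 'M[C]_n.+1) :
  {in As &, forall A B, A * B = B * A} -> {in As, forall A, A \in unitmx} ->
  exists2 P : 'M[C]_n.+1, P \in unitmx & {in As, forall A (z : int),
    is_trig_mx (conjmx P (A ^ z)) /\ forall i, conjmx P (A ^ z) i i = conjmx P A i i ^ z}.
Proof.
move=> cAs uAs.
have memV A : A \in As ++ map GRing.inv As -> exists2 B, B \in As & A = B \/ A = B^-1.
  rewrite mem_cat => /orP[AsA | /mapP[B AsB ->]]; first by exists A; last left.
  by exists B; last right.
have cAsV : {in As ++ map GRing.inv As &, forall A B, comm_mx A B}.
  move=> A B /memV[A' AsA' [->|->]] /memV[B' AsB' [->|->]];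
    have cA'B' : GRing.comm A' B' := cAs _ _ AsA' AsB'.
  - exact: cA'B'.
  - exact: commrV.
  - exact/commr_sym/commrV/commr_sym.
  - exact/commrV/commr_sym/commrV/commr_sym.
have [P /unitarymx_unit uP /allP trigP] := cotrigonalization cAsV.
exists P => // A AsA z; have uA := uAs A AsA.
have tA : is_trig_mx (conjmx P A) by apply: trigP; rewrite mem_cat AsA.
have tAV : is_trig_mx (conjmx P A^-1) by apply: trigP; rewrite mem_cat map_f ?orbT.
rewrite conjmx_exprz //; apply: trig_mxXz => //; first exact: conjmx_unit.
by rewrite -conjmxV.
Qed.

Lemma rat_row_int_scale n (r : 'rV[rat]_n) :
  exists2 d : int, d != 0 &
    exists z : 'rV[int]_n, map_mx (intr : int -> rat) z = d%:~R *: r.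
Proof.
pose d := \prod_(j < n) denq (r 0 j).
exists d; first by apply/prodf_neq0 => j _; rewrite denq_neq0.
exists (\row_i (numq (r 0 i) * \prod_(j < n | j != i) denq (r 0 j))).
apply/rowP => i; rewrite !mxE intrM numqE /d [in RHS](bigD1 i) //= intrM.
by rewrite [RHS]mulrC mulrA.
Qed.

(* The rank of an integral matrix is the same over Q and over algC, and a rational
   kernel vector can be scaled to an integral one. *)
Lemma int_kernel_from_algC m n (B : 'M[int]_(m, n)) (v : 'cV[algC]_n) :
  v != 0 -> map_mx intr B *m v = 0 -> exists2 z : 'cV[int]_n, z != 0 & B *m z = 0.
Proof.
move=> v0 Bv; pose BQ := map_mx (intr : int -> rat) B.
have BQC : map_mx (ratr : rat -> algC) BQ = map_mx intr B.
  by apply/matrixP => i j; rewrite !mxE ratr_int.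
have : ~~ row_free BQ^T.
  rewrite /row_free -(mxrank_map (ratr : {rmorphism rat -> algC})) -map_trmx BQC.
  apply: contra v0 => freeB; rewrite -trmx_eq0 -(mulmx_free_eq0 _ freeB).
  by rewrite -trmx_mul Bv trmx0.
rewrite -kermx_eq0 => /rowV0Pn[r /sub_kermxP rB r0].
have [d d0 [z zr]] := rat_row_int_scale r.
exists z^T.
  rewrite trmx_eq0; apply: contra r0 => /eqP z0; move: zr; rewrite z0 map_mx0.
  by move/esym/eqP; rewrite scaler_eq0 intr_eq0 (negPf d0).
apply: trmx_inj; rewrite trmx_mul trmxK trmx0.
have : map_mx (intr : int -> rat) (z *m B^T) = 0.
  by rewrite map_mxM zr -map_trmx -/BQ -scalemxAl rB scaler0.
move/matrixP => zB; apply/matrixP => i j; move/eqP: (zB i j).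
by rewrite !mxE intr_eq0 => /eqP.
Qed.

Lemma int_common_fixed n (A B : 'M[int]_n) (v : 'cV[algC]_n) :
  v != 0 -> map_mx intr A *m v = v -> map_mx intr B *m v = v ->
  exists2 z : 'cV[int]_n, z != 0 & A *m z = z /\ B *m z = z.
Proof.
move=> v0 Av Bv.
have [|z z0] := int_kernel_from_algC (B := col_mx (A - 1%:M) (B - 1%:M)) v0.
  rewrite map_col_mx mul_col_mx !map_mxB !map_scalar_mx rmorph1 !mulmxBl Av Bv.
  by rewrite !mul1mx !subrr col_mx0.
rewrite mul_col_mx => /eqP; rewrite col_mx_eq0 !mulmxBl !mul1mx !subr_eq0.
by move=> /andP[/eqP Az /eqP Bz]; exists z.
Qed.

Lemma unitmx_fixed_exprz n (X : 'M[int]_n.+1) (z : 'cV[int]_n.+1) (k : int) :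
  X \in unitmx -> X *m z = z -> X ^ k *m z = z.
Proof.
move=> uX Xz; have Xnz j : X ^+ j *m z = z.
  by elim: j => [|j IHj]; rewrite ?mul1mx // exprS -mulmxE -mulmxA IHj.
case: k => j; first exact: Xnz.
have uXj : X ^+ j.+1 \in unitmx by apply: unitrX.
by change (invmx (X ^+ j.+1) *m z = z); rewrite -{1}(Xnz j.+1) mulKmx.
Qed.

Lemma eigenvalue_int_conjmx n (P : 'M[algC]_n) (X : 'M[int]_n) a :
  P \in unitmx -> eigenvalue (map_mx (intr : int -> rat) X) a ->
  eigenvalue (conjmx P (map_mx intr X)) (ratr a).
Proof.
move=> uP; rewrite -(eigenvalue_map (ratr : {rmorphism rat -> algC})).
have -> : map_mx (ratr : rat -> algC) (map_mx (intr : int -> rat) X) = map_mx intr X.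
  by apply/matrixP => i j; rewrite !mxE ratr_int.
rewrite -{1}(conjmxK (map_mx intr X) uP); apply: eigenvalue_conjmx.
  by apply: stablemx_unit; rewrite unitmx_inv.
by rewrite row_free_unit unitmx_inv.
Qed.

Section SubgroupCovers.
Variable G : zmodType.
Implicit Types (S P Q R : {pred G}) (g h w : G).

Lemma zmod_closed_memDr S g h : zmod_closed S -> g \in S -> (g + h \in S) = (h \in S).
Proof.
move=> zS Sg; have [_ SD] := GRing.zmod_closedD zS.
apply/idP/idP => [Sgh | Sh]; last exact: SD.
by rewrite -(addKr g h) SD // (GRing.zmod_closedN zS).
Qed.

Lemma zmod_closed_memDl S g h : zmod_closed S -> h \in S -> (g + h \in S) = (g \in S).
Proof. by rewrite addrC; apply: zmod_closed_memDr. Qed.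

Lemma zmod_closed_memN S g : zmod_closed S -> (- g \in S) = (g \in S).
Proof.
move=> zS; apply/idP/idP => /(GRing.zmod_closedN zS) //.
by rewrite opprK.
Qed.

Lemma zmod_closed_notin2 Q R q r : zmod_closed Q -> zmod_closed R ->
  q \notin Q -> r \notin R -> exists2 g, g \notin Q & g \notin R.
Proof.
move=> zQ zR Qq Rr; have [Rq | Rq] := boolP (q \in R); last by exists q.
have [Qr | Qr] := boolP (r \in Q); last by exists r.
by exists (q + r); [rewrite zmod_closed_memDl | rewrite zmod_closed_memDr].
Qed.

Lemma zmod_closed_double P Q R g w :
  zmod_closed P -> zmod_closed Q -> zmod_closed R ->
  (forall h, h \notin Q -> h \notin R -> h \in P) ->
  g \in Q -> g \notin R -> w \in R -> w \notin Q -> g + g \in P.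
Proof.
move=> zP zQ zR outP Qg Rg Rw Qw; have [_ SD] := GRing.zmod_closedD zP.
have -> : g + g = (g + w) + (g - w) by rewrite addrACA subrr addr0.
apply: SD; apply: outP.
- by rewrite zmod_closed_memDr.
- by rewrite zmod_closed_memDl.
- by rewrite zmod_closed_memDr // zmod_closed_memN.
- by rewrite zmod_closed_memDl // zmod_closed_memN.
Qed.

Lemma zmod_closed_cover3_double P Q R p q r :
  zmod_closed P -> zmod_closed Q -> zmod_closed R ->
  (forall g, [|| g \in P, g \in Q | g \in R]) ->
  p \notin P -> q \notin Q -> r \notin R -> forall g, g + g \in P.
Proof.
move=> zP zQ zR PQR Pp Qq Rr.
have outP h : h \notin Q -> h \notin R -> h \in P.
  by move=> /negPf Qh /negPf Rh; have := PQR h; rewrite Qh Rh !orbF.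
have [x Qx Rx] := zmod_closed_notin2 zQ zR Qq Rr.
have [y Py Ry] := zmod_closed_notin2 zP zR Pp Rr.
have [z Pz Qz] := zmod_closed_notin2 zP zQ Pp Qq.
have QR_P g : g \in Q -> g \in R -> g \in P.
  move=> Qg Rg; rewrite -(zmod_closed_memDl _ zP (outP x Qx Rx)) outP //.
    by rewrite zmod_closed_memDr.
  by rewrite zmod_closed_memDr.
move=> g; have [Pg | Pg] := boolP (g \in P).
  by have [_ SD] := GRing.zmod_closedD zP; apply: SD.
have /orP[Qg | Rg] : (g \in Q) || (g \in R) by have := PQR g; rewrite (negPf Pg).
  have Rg : g \notin R by apply: contra Pg; apply: QR_P.
  have Rz : z \in R by have := PQR z; rewrite (negPf Pz) (negPf Qz).
  exact: zmod_closed_double zP zQ zR outP Qg Rg Rz Qz.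
have Qg : g \notin Q by apply: contra Pg => Qg; apply: QR_P.
have Qy : y \in Q by have := PQR y; rewrite (negPf Py) (negPf Ry) orbF.
have outP' h : h \notin R -> h \notin Q -> h \in P by move=> *; apply: outP.
exact: zmod_closed_double zP zR zQ outP' Rg Qg Qy Ry.
Qed.

End SubgroupCovers.

Lemma ord3_cases (i : 'I_3) : [\/ i = 0, i = 1 | i = 2].
Proof.
by case: i => -[|[|[|//]]] lt_i3; [constructor 1 | constructor 2 | constructor 3];
  apply: val_inj.
Qed.

Lemma exists_ord3 (P : 'I_3 -> bool) : (exists i, P i) -> [|| P 0, P 1 | P 2].
Proof. by move=> [i Pi]; case: (ord3_cases i) => Ei; rewrite -Ei Pi ?orbT. Qed.

Lemma xor_cover_pattern (a b c : 'I_3 -> bool) :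
  (forall al be ga : bool, exists i, ~~ ((al && a i) (+) (be && b i) (+) (ga && c i))) ->
  (forall i, a i || b i) ->
  injective (fun i => (a i, b i)) /\
  exists al be : bool, forall i, c i = (al && a i) (+) (be && b i).
Proof.
move=> /(_ _ _ _) /exists_ord3 cover ab.
suff: [&& (a 0, b 0) != (a 1, b 1), (a 0, b 0) != (a 2, b 2) & (a 1, b 1) != (a 2, b 2)]
    /\ exists al be : bool, [&& c 0 == (al && a 0) (+) (be && b 0),
          c 1 == (al && a 1) (+) (be && b 1) & c 2 == (al && a 2) (+) (be && b 2)].
  move=> [/and3P[n01 n02 n12] [al [be /and3P[/eqP c0 /eqP c1 /eqP c2]]]].
  split; last by exists al, be => i; case: (ord3_cases i) => ->.
  move=> i j; case: (ord3_cases i) => ->; case: (ord3_cases j) => -> // /eqP;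
    by rewrite ?(negPf n01, negPf n02, negPf n12) // eq_sym
      ?(negPf n01, negPf n02, negPf n12).
move: (cover false false true) (cover true false false) (cover false true false)
  (cover true true false) (cover true false true) (cover false true true)
  (cover true true true) (ab 0) (ab 1) (ab 2).
move: (a 0) (a 1) (a 2) (b 0) (b 1) (b 2) (c 0) (c 1) (c 2).
by do 9!case=> //=; split=> //; first [by exists false, false
  | by exists true, false | by exists false, true | by exists true, true].
Qed.

Section Characters.
Variable F : fieldType.
Implicit Types (a b c : F) (g h : int * int * int).

Definition char3 a b c g : F := a ^ g.1.1 * b ^ g.1.2 * c ^ g.2.

Lemma char3D a b c g h : a != 0 -> b != 0 -> c != 0 ->
  char3 a b c (g + h) = char3 a b c g * char3 a b c h.
Proof.
move=> a0 b0 c0; rewrite /char3 /= !exprzDr ?unitfE //.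
by rewrite [RHS]mulrACA [X in X * _]mulrACA.
Qed.

Lemma char3_ker_zmod_closed a b c : a != 0 -> b != 0 -> c != 0 ->
  zmod_closed [pred g | char3 a b c g == 1].
Proof.
move=> a0 b0 c0; split=> [|g h]; rewrite !inE; first by rewrite /char3 !expr0z !mulr1.
move=> /eqP g1 /eqP h1; have := char3D (g - h) h a0 b0 c0.
by rewrite subrK g1 h1 mulr1 => <-.
Qed.

Lemma cover3_sqr_eq1 (a b c : 'I_3 -> F) :
  (forall i, [/\ a i != 0, b i != 0 & c i != 0]) ->
  (forall n m s : int, exists i, a i ^ n * b i ^ m * c i ^ s = 1) ->
  (forall i, ~ (a i = 1 /\ b i = 1)) ->
  forall i, [/\ a i ^+ 2 = 1, b i ^+ 2 = 1 & c i ^+ 2 = 1].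
Proof.
move=> nz cover no11.
pose K i := [pred g | char3 (a i) (b i) (c i) g == 1].
have zK i : zmod_closed (K i) by have [*] := nz i; apply: char3_ker_zmod_closed.
have K012 g : [|| g \in K 0, g \in K 1 | g \in K 2].
  apply: (@exists_ord3 (fun i => g \in K i)).
  by have [i gi] := cover g.1.1 g.1.2 g.2; exists i; rewrite inE /char3 gi.
have properK i : exists p, p \notin K i.
  have [a1 | a1] := eqVneq (a i) 1; last first.
    by exists (1, 0, 0); rewrite inE /char3 /= expr1z !expr0z !mulr1.
  exists (0, 1, 0); rewrite inE /char3 /= expr1z !expr0z mul1r mulr1.
  by apply/eqP => b1; apply: (no11 i).
have [[p0 Kp0] [p1 Kp1] [p2 Kp2]] := And3 (properK 0) (properK 1) (properK 2).
have double j g : g + g \in K j.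
  have K_perm k l m h : [|| h \in K k, h \in K l | h \in K m] ->
      [|| h \in K l, h \in K k | h \in K m] /\ [|| h \in K m, h \in K k | h \in K l].
    by case: (h \in K k) (h \in K l) (h \in K m) => [] [] [].
  case: (ord3_cases j) => ->.
  - exact: zmod_closed_cover3_double (zK 0) (zK 1) (zK 2) K012 Kp0 Kp1 Kp2 g.
  - by apply: zmod_closed_cover3_double (zK 1) (zK 0) (zK 2) _ Kp1 Kp0 Kp2 g => h;
      case: (K_perm _ _ _ h (K012 h)).
  - by apply: zmod_closed_cover3_double (zK 2) (zK 0) (zK 1) _ Kp2 Kp0 Kp1 g => h;
      case: (K_perm _ _ _ h (K012 h)).
move=> i; split.
- by have := double i (1, 0, 0); rewrite inE /char3 /= !expr0z !mulr1 => /eqP.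
- by have := double i (0, 1, 0); rewrite inE /char3 /= !expr0z mulr1 mul1r => /eqP.
- by have := double i (0, 0, 1); rewrite inE /char3 /= !expr0z !mul1r => /eqP.
Qed.

End Characters.

Lemma sqr_eq1_sign (R : idomainType) (x : R) : x ^+ 2 = 1 -> x = (-1) ^+ (x == -1).
Proof.
move/eqP; rewrite sqrf_eq1 => /orP[/eqP-> | /eqP->]; last by rewrite eqxx expr1.
by case: eqP => [<- | _]; rewrite ?expr1 ?expr0.
Qed.

Lemma eigenvalue_pattern (F : numFieldType) (a b c : 'I_3 -> F) :
  (forall i, [/\ a i != 0, b i != 0 & c i != 0]) ->
  (forall n m s : int, exists i, a i ^ n * b i ^ m * c i ^ s = 1) ->
  (forall i, ~ (a i = 1 /\ b i = 1)) ->
  injective (fun i => (a i, b i)) /\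
  exists al be : bool, forall i, c i = a i ^+ al * b i ^+ be.
Proof.
move=> nz cover no11; have sq := cover3_sqr_eq1 nz cover no11.
pose sa i := a i == -1; pose sb i := b i == -1; pose sc i := c i == -1.
have Ea i : a i = (-1) ^+ sa i by apply: sqr_eq1_sign; case: (sq i).
have Eb i : b i = (-1) ^+ sb i by apply: sqr_eq1_sign; case: (sq i).
have Ec i : c i = (-1) ^+ sc i by apply: sqr_eq1_sign; case: (sq i).
have signX (e f : bool) : ((-1 : F) ^+ e) ^+ f = (-1) ^+ (f && e).
  by case: f; rewrite ?expr1 ?expr0.
have cover_s (al be ga : bool) :
    exists i, ~~ ((al && sa i) (+) (be && sb i) (+) (ga && sc i)).
  have [i ci] := cover al be ga; exists i; apply/negP => s1.
  move: ci; change (a i ^+ al * b i ^+ be * c i ^+ ga = 1 -> False).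
  rewrite [a i]Ea [b i]Eb [c i]Ec !signX -!signr_addb => /(@signr_inj F _ false).
  by move=> s0; rewrite s0 in s1.
have ab_s i : sa i || sb i.
  case Sa: (sa i); case Sb: (sb i) => //; case: (no11 i).
  by rewrite Ea Eb Sa Sb !expr0.
have [inj_s [al [be cE]]] := xor_cover_pattern cover_s ab_s.
split=> [i j [ai bi] | ]; first by apply: inj_s; rewrite /= /sa /sb ai bi.
exists al, be => i.
by rewrite [c i]Ec [a i]Ea [b i]Eb !signX -signr_addb cE.
Qed.

Lemma gen_subgroup2_exprn (N M : 'M[int]_3) k l : gen_subgroup2 N M (N ^+ k * M ^+ l).
Proof.
have genX X j : gen_subgroup2 N M X -> gen_subgroup2 N M (X ^+ j).
  by move=> genX; elim: j => [|j IHj]; [exact: gen_1 | rewrite exprS; exact: gen_mul].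
by apply: gen_mul; apply: genX; [exact: gen_N | exact: gen_M].
Qed.

Section CommutingIntegerMatrices.
Variables N M C : 'M[int]_3.
Hypotheses (uN : N \in unitmx) (uM : M \in unitmx) (uC : C \in unitmx).
Hypotheses (cNM : N * M = M * N) (cCN : C * N = N * C) (cCM : C * M = M * C).

Local Notation f := (map_mx (intr : int -> algC)).

Lemma joint_triangular_form : exists2 P : 'M[algC]_3, P \in unitmx &
  {in [:: N; M; C], forall X (z : int), is_trig_mx (conjmx P (f (X ^ z))) /\
     forall i, conjmx P (f (X ^ z)) i i = conjmx P (f X) i i ^ z}.
Proof.
have uNMC X : X \in [:: N; M; C] -> X \is a GRing.unit.
  by rewrite !inE => /or3P[] /eqP->.
have cNMC : {in [:: N; M; C] &, forall X Y, X * Y = Y * X}.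
  move=> X Y; rewrite !inE => /or3P[] /eqP-> /or3P[] /eqP-> //;
    by [rewrite cNM | rewrite cCN | rewrite cCM].
have cfNMC : {in map f [:: N; M; C] &, forall A B, A * B = B * A}.
  by move=> _ _ /mapP[X X3 ->] /mapP[Y Y3 ->]; rewrite -!rmorphM cNMC.
have ufNMC : {in map f [:: N; M; C], forall A, A \in unitmx}.
  by move=> _ /mapP[X X3 ->]; apply: rmorph_unit; apply: uNMC.
have [P uP trigP] := cotrigonalization_units cfNMC ufNMC.
exists P => // X X3 z; have := trigP (f X) (map_f _ X3) z.
by rewrite -rmorphXz // uNMC.
Qed.

Section TriangularForm.
Variable P : 'M[algC]_3.
Hypothesis uP : P \in unitmx.
Hypothesis trigP : {in [:: N; M; C], forall X (z : int),
  is_trig_mx (conjmx P (f (X ^ z))) /\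
  forall i, conjmx P (f (X ^ z)) i i = conjmx P (f X) i i ^ z}.

Local Notation T X := (conjmx P (f X)).

Let mem_N : N \in [:: N; M; C]. Proof. by rewrite inE eqxx. Qed.
Let mem_M : M \in [:: N; M; C]. Proof. by rewrite !inE eqxx orbT. Qed.
Let mem_C : C \in [:: N; M; C]. Proof. by rewrite !inE eqxx !orbT. Qed.

Lemma conj_int_mul X Y : T (X * Y) = T X * T Y.
Proof. by rewrite rmorphM conjmx_mul. Qed.

Lemma conj_int_comm X Y : X * Y = Y * X -> T X *m T Y = T Y *m T X.
Proof. by move=> cXY; rewrite mulmxE -!conj_int_mul cXY. Qed.

Lemma conj_int_trig X : X \in [:: N; M; C] -> is_trig_mx (T X).
Proof. by move=> X3; have [] := trigP X3 1. Qed.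

Lemma conj_int_diag_neq0 i : [/\ T N i i != 0, T M i i != 0 & T C i i != 0].
Proof.
have neq0 X : X \in [:: N; M; C] -> T X i i != 0.
  move=> X3; apply: trig_unitmx_diag_neq0 (conj_int_trig X3) _.
  apply: (conjmx_unit uP); apply: rmorph_unit.
  by move: X3; rewrite !inE => /or3P[] /eqP->.
by split; apply: neq0.
Qed.

Lemma word_trig (n m s : int) :
  is_trig_mx (T (N ^ n * M ^ m * C ^ s)) /\
  forall i, T (N ^ n * M ^ m * C ^ s) i i = T N i i ^ n * T M i i ^ m * T C i i ^ s.
Proof.
have [[tN dN] [tM dM] [tC dC]] := And3 (trigP mem_N n) (trigP mem_M m) (trigP mem_C s).
have tNM := trig_mulmx tN tM.
rewrite !conj_int_mul -!mulmxE; split; first exact: trig_mulmx.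
by move=> i; rewrite (mulmx_trig_diag i tNM tC) (mulmx_trig_diag i tN tM) dN dM dC.
Qed.

Lemma word_cover : (forall n m s : int, has_eigenvalue1 (N ^ n * M ^ m * C ^ s)) ->
  forall n m s : int, exists i, T N i i ^ n * T M i i ^ m * T C i i ^ s = 1.
Proof.
move=> eig1 n m s; have [tW dW] := word_trig n m s.
have := eigenvalue_int_conjmx uP (eig1 n m s); rewrite rmorph1.
by move=> /(trig_eigenvalue tW)[i Wi]; exists i; rewrite -dW.
Qed.

Lemma no_joint_eigenvalue11 :
  (forall k : 'cV[int]_3, (forall n m : int, (N ^ n * M ^ m) *m k = k) -> k = 0) ->
  forall i, ~ (T N i i = 1 /\ T M i i = 1).
Proof.
move=> fix0 i [Ni Mi].
have trig1 X : X \in [:: N; M; C] -> is_trig_mx (T X - 1%:M).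
  by move=> X3; rewrite trig_mxB ?conj_int_trig ?scalar_mx_is_trig.
have comm1 : GRing.comm (T N - 1%:M) (T M - 1%:M).
  apply: commrB; last exact: commr1.
  by apply/commr_sym/commrB; [exact/commr_sym/(conj_int_comm cNM) | exact: commr1].
have N1 : (T N - 1%:M) i i = 0 by rewrite mxE Ni !mxE eqxx subrr.
have M1 : (T M - 1%:M) i i = 0 by rewrite mxE Mi !mxE eqxx subrr.
have [u u0 [Nu Mu]] := trig_common_kernel (trig1 _ mem_N) (trig1 _ mem_M) comm1 N1 M1.
have fixed X : (T X - 1%:M) *m u = 0 -> f X *m (invmx P *m u) = invmx P *m u.
  move/eqP; rewrite mulmxBl mul1mx subr_eq0 conjumx // => /eqP Xu.
  by rewrite -{2}Xu !mulmxA mulVmx // mul1mx.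
have Pu0 : invmx P *m u != 0.
  by apply: contraNneq u0 => Pu; rewrite -(mulKVmx uP u) Pu mulmx0.
have [z z0 [Nz Mz]] := int_common_fixed Pu0 (fixed N Nu) (fixed M Mu).
apply: (negP z0); apply/eqP/fix0 => n m.
by rewrite -mulmxE -mulmxA !unitmx_fixed_exprz.
Qed.

Lemma eq_word_of_diag (al be : bool) :
  injective (fun i => (T N i i, T M i i)) ->
  (forall i, T C i i = T N i i ^+ al * T M i i ^+ be) -> C = N ^+ al * M ^+ be.
Proof.
move=> inj_NM cE; set W := N ^+ al * M ^+ be.
have [tW dW] := word_trig al be 0; rewrite expr0z mulr1 -/W in tW dW.
have cWN : W * N = N * W.
  apply/commr_sym/commrM; [exact/commrX/commr_refl | exact/commrX].
have cWM : W * M = M * W.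
  apply/commr_sym/commrM; [exact/commrX/commr_sym | exact/commrX/commr_refl].
have eCW : T C = T W.
  apply: (trig_commutant_eq_diag (conj_int_trig mem_C) tW (conj_int_trig mem_N)
    (conj_int_trig mem_M) (conj_int_comm cCN) (conj_int_comm cWN) (conj_int_comm cCM)
    (conj_int_comm cWM) _ inj_NM).
  by move=> i; rewrite dW cE expr0z mulr1.
have fCW : f C = f W by rewrite -(conjmxK (f C) uP) eCW conjmxK.
apply/matrixP => i j; move/matrixP/(_ i j): fCW; rewrite !mxE; exact: intr_inj.
Qed.

End TriangularForm.

End CommutingIntegerMatrices.

Theorem lemma2p5 (N M C : 'M[int]_3) :
  GL3Z N -> GL3Z M ->
  N * M = M * N ->
  (forall n m : int, has_eigenvalue1 (N ^ n * M ^ m)) ->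
  (forall k : 'cV[int]_3, (forall n m : int, (N ^ n * M ^ m) *m k = k) -> k = 0) ->
  GL3Z C -> C * N = N * C -> C * M = M * C ->
  (forall n m s : int, has_eigenvalue1 (N ^ n * M ^ m * C ^ s)) ->
  gen_subgroup2 N M C.
Proof.
(* (ii) is not needed: it is the case s = 0 of the last hypothesis. *)
move=> uN uM cNM _ fixed0 uC cCN cCM eig1.
have [P uP trigP] := joint_triangular_form uN uM uC cNM cCN cCM.
have [inj_NM [al [be diagC]]] := eigenvalue_pattern
  (conj_int_diag_neq0 uN uM uC uP trigP) (word_cover uP trigP eig1)
  (no_joint_eigenvalue11 uN uM cNM uP trigP fixed0).
rewrite (eq_word_of_diag cNM cCN cCM uP trigP inj_NM diagC).
exact: gen_subgroup2_exprn.
Qed.
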